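(* Let $w$ be a word of length $n$ over a finite alphabet $\Sigma$, $\phi$ an antimorphic involution on $\Sigma^*$, and $k\ge 2$ an integer. For $1\le i\le\lfloor n/2\rfloor$ let $s_i$ be the binary string of length $n-2i+1$ with $s_i[\ell]=1$ if and only if $w[\ell\,..\,\ell+2i-1]$ is a pseudo square with respect to $\phi$. There is an algorithm that, given the strings $s_1,\dots,s_{\lfloor n/2\rfloor}$ and $k$ as input, finds all factors of $w$ that are pseudo $k$th powers with respect to $\phi$ (i.e., all occurrences, given by starting position and length), in time linear in $\sum_i|s_i|$.
   Context: $w[p\,..\,q]$ denotes the factor of $w$ from position $p$ to position $q$ (positions start at $1$). A function $\phi:\Sigma^*\to\Sigma^*$ is an antimorphic involution if $\phi(uv)=\phi(v)\phi(u)$ and $\phi(\phi(w))=w$. A nonempty word is a pseudo $k$th power with respect to $\phi$ if it equals $u_1\cdots u_k$ where for all $1\le i,j\le k$, $u_i=u_j$ or $u_i=\phi(u_j)$; a pseudo square is a pseudo $2$nd power. *)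

From Stdlib Require Import ClassicalEpsilon.
From mathcomp Require Import all_boot.
Set Implicit Arguments. Unset Strict Implicit. Unset Printing Implicit Defensive.

Definition bool_of (P : Prop) : bool :=
  if excluded_middle_informative P then true else false.

(* w[p..q], positions starting at 1. *)
Definition factor (S : Type) (w : seq S) (p q : nat) : seq S :=
  take (q.+1 - p) (drop p.-1 w).

Definition antimorphic_involution (S : Type) (phi : seq S -> seq S) : Prop :=
  (forall u v, phi (u ++ v) = phi v ++ phi u) /\ (forall x, phi (phi x) = x).

Definition pseudo_power (S : eqType) (phi : seq S -> seq S) (k : nat)
    (x : seq S) : Prop :=
  x <> [::] /\
  exists us : seq (seq S), size us = k /\ flatten us = x /\
    forall i j, i < k -> j < k ->
      nth [::] us i = nth [::] us j \/ nth [::] us i = phi (nth [::] us j).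

Definition pseudo_square (S : eqType) (phi : seq S -> seq S) (x : seq S) :=
  pseudo_power phi 2 x.

Definition s_of (S : eqType) (phi : seq S -> seq S) (w : seq S) (i : nat)
    : bitseq :=
  [seq bool_of (pseudo_square phi (factor w l (l + 2 * i - 1)))
  | l <- iota 1 (size w - 2 * i + 1)].

Definition all_s (S : eqType) (phi : seq S -> seq S) (w : seq S) : seq bitseq :=
  [seq s_of phi w i | i <- iota 1 (size w)./2].

Definition pseudo_power_occ (S : eqType) (phi : seq S -> seq S) (k : nat)
    (w : seq S) (p L : nat) : Prop :=
  [/\ 1 <= p, 1 <= L, p + L - 1 <= size w &
      pseudo_power phi k (factor w p (p + L - 1))].

Inductive instr : Type :=
  | IConst of nat & nat
  | IAdd of nat & nat & nat
  | ISub of nat & nat & nat  (* ISub r a b   : R[r] := R[a] - R[b] (truncated) *)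
  | ILoad of nat & nat
  | IStore of nat & nat
  | IJz of nat & nat
  | IJmp of nat
  | IHalt.

Record state : Type := State { pc : nat; reg : nat -> nat; mem : nat -> nat }.

Definition upd (f : nat -> nat) (x v : nat) : nat -> nat :=
  fun y => if y == x then v else f y.

Definition fetch (P : seq instr) (st : state) : instr := nth IHalt P (pc st).

Definition halted (P : seq instr) (st : state) : bool :=
  if fetch P st is IHalt then true else false.

(* One step (each instruction costs one unit of time). *)
Definition step (P : seq instr) (st : state) : state :=
  let: State c R M := st in
  match fetch P st with
  | IConst r n => State c.+1 (upd R r n) M
  | IAdd r a b => State c.+1 (upd R r (R a + R b)) M
  | ISub r a b => State c.+1 (upd R r (R a - R b)) M
  | ILoad r a => State c.+1 (upd R r (M (R a))) M
  | IStore a b => State c.+1 R (upd M (R a) (R b))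
  | IJz r l => State (if R r == 0 then l else c.+1) R M
  | IJmp l => State l R M
  | IHalt => st
  end.

Fixpoint run (P : seq instr) (t : nat) (st : state) : option state :=
  if halted P st then Some st else
  match t with
  | 0 => None
  | t'.+1 => run P t' (step P st)
  end.

(* Input encoding of (k, s_1, ..., s_h): memory cells
   M[0] = k, M[1] = h, M[2+2(i-1)] = start address of s_i,
   M[3+2(i-1)] = |s_i|, followed by the bits of s_1, ..., s_h (0/1). *)
Definition encode_input (k : nat) (ss : seq bitseq) : seq nat :=
  let h := size ss in
  [:: k, h & flatten [seq [:: 2 + 2 * h + sumn (map size (take i ss));
                             size (nth [::] ss i)] | i <- iota 0 h]]
  ++ map nat_of_bool (flatten ss).

Definition init_state (input : seq nat) : state :=
  State 0 (fun _ => 0) (fun a => nth 0 input a).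

(* Output convention: on halting, R[0] = number c of reported occurrences,
   R[1] = base address b; occurrence j < c is the pair
   (M[b+2j], M[b+2j+1]) = (starting position, length). *)
Definition output (st : state) : seq (nat * nat) :=
  [seq (mem st (reg st 1 + 2 * j), mem st (reg st 1 + 2 * j + 1))
  | j <- iota 0 (reg st 0)].

From Pilot Require Import Defs.
From Stdlib Require Import ClassicalEpsilon.
From mathcomp Require Import all_boot zify.
Set Implicit Arguments. Unset Strict Implicit. Unset Printing Implicit Defensive.

(* A word of length [k m] is a pseudo [k]-th power iff its [k] blocks of length
   [m] are pairwise equal up to [phi]; as [phi] is an involution this is an
   equivalence relation, so it suffices that consecutive blocks are related,
   i.e. that the [k - 1] windows of length [2 m] starting at multiples of [m]
   are pseudo squares. Hence [(p, k m)] is an occurrence iff [s_m] has ones at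
   positions [p, p + m, ..., p + (k - 2) m]. Scanning [s_m] from right to left
   and replacing every one by the length of the run of ones of stride [m]
   starting there (one more than the value [m] positions to the right) finds
   all such [p] in time [O(|s_m|)]; as no [s_m] is empty, the whole scan takes
   time linear in [sum |s_m|]. *)

(** * Pseudo powers *)

Section AntimorphicInvolution.

Variables (S : Type) (phi : seq S -> seq S).
Hypothesis phiP : antimorphic_involution phi.

Lemma antimorph_nil : phi [::] = [::].
Proof.
have [phiM _] := phiP; have := congr1 size (phiM [::] [::]).
by rewrite cat0s size_cat; case: (phi [::]) => [|a u] //=; lia.
Qed.

Lemma leq_size_antimorph u : size u <= size (phi u).
Proof.
have [phiM phiK] := phiP; elim: u => [|a u IHu] //.
have phi_a : size (phi [:: a]) != 0.
  by apply/eqP => /size0nil phia; have := phiK [:: a]; rewrite phia antimorph_nil.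
by rewrite -cat1s phiM !size_cat /=; lia.
Qed.

Lemma size_antimorph u : size (phi u) = size u.
Proof.
have [_ phiK] := phiP; apply/eqP; rewrite eqn_leq leq_size_antimorph andbT.
by rewrite -{2}(phiK u) leq_size_antimorph.
Qed.

Definition phi_equiv u v := u = v \/ u = phi v.

Lemma phi_equiv_sym u v : phi_equiv u v -> phi_equiv v u.
Proof. by have [_ phiK] := phiP; case=> ->; [left | right; rewrite phiK]. Qed.

Lemma phi_equiv_trans u v x : phi_equiv u v -> phi_equiv v x -> phi_equiv u x.
Proof.
have [_ phiK] := phiP.
by case=> ->; case=> ->; [left | right | right | left; rewrite phiK].
Qed.

Lemma size_phi_equiv u v : phi_equiv u v -> size u = size v.
Proof. by case=> ->; rewrite ?size_antimorph. Qed.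

End AntimorphicInvolution.

Section Blocks.

Variable S : Type.
Implicit Type x : seq S.

Definition block x m t := take m (drop (t * m) x).

Lemma blockS x m t : block x m t.+1 = block (drop m x) m t.
Proof. by rewrite /block drop_drop mulSn addnC. Qed.

Lemma take_double_block x m t :
  take (2 * m) (drop (t * m) x) = block x m t ++ block x m t.+1.
Proof. by rewrite mul2n -addnn takeD /block drop_drop mulSn. Qed.

Lemma size_block x m t k : t < k -> size x = k * m -> size (block x m t) = m.
Proof.
move=> ltk sizex; rewrite /block size_take size_drop sizex.
have : m + t * m <= k * m by rewrite -mulSn leq_mul2r ltk orbT.
by case: ltnP => //; lia.
Qed.

Lemma flatten_blocks x m k :
  size x = k * m -> flatten [seq block x m t | t <- iota 0 k] = x.
Proof.
elim: k x => [|k IHk] x sizex; first by move/size0nil: sizex ->.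
rewrite /= (iotaDl 1 0) -map_comp.
rewrite (eq_map (_ : _ =1 block (drop m x) m)) => [|t]; last by rewrite /= blockS.
rewrite IHk ?size_drop ?sizex ?mulSn ?addKn //.
by rewrite /block mul0n drop0 cat_take_drop.
Qed.

End Blocks.

Lemma size_flatten_uniform (S : eqType) (us : seq (seq S)) m :
  (forall u, u \in us -> size u = m) -> size (flatten us) = size us * m.
Proof.
elim: us => [|u us IHus] sizeus //=.
rewrite size_cat sizeus ?mem_head // IHus // => v usv.
by rewrite sizeus // in_cons usv orbT.
Qed.

Lemma block_flatten (S : eqType) (us : seq (seq S)) m t :
  (forall u, u \in us -> size u = m) -> block (flatten us) m t = nth [::] us t.
Proof.
elim: us t => [|u us IHus] t sizeus; first by rewrite /block; case: t.
have sizeu : size u = m by rewrite sizeus ?mem_head.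
case: t => [|t]; first by rewrite /block drop0 /= -sizeu take_size_cat.
rewrite blockS /= -{1}sizeu drop_size_cat // IHus // => v usv.
by rewrite sizeus // in_cons usv orbT.
Qed.

Section PseudoPowers.

Variables (S : eqType) (phi : seq S -> seq S).
Hypothesis phiP : antimorphic_involution phi.

Lemma pseudo_square_catP u v : size u = size v -> 0 < size u ->
  pseudo_square phi (u ++ v) <-> phi_equiv phi u v.
Proof.
move=> sizeuv u_gt0; split.
- case=> _ [us [sizeus [flat_us equiv_us]]].
  case: us sizeus flat_us equiv_us => [|a [|b [|//]]] // _ /= flat_ab equiv_ab.
  have sizeab : size a = size b by apply: (size_phi_equiv phiP) (equiv_ab 0 1 _ _).
  rewrite cats0 in flat_ab; move/eqP: (flat_ab); rewrite eqseq_cat; last first.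
    by have := congr1 size flat_ab; rewrite !size_cat; lia.
  by case/andP => /eqP <- /eqP <-; exact: (equiv_ab 0 1).
- move=> equiv_uv; split; first by case: u u_gt0 {sizeuv equiv_uv}.
  exists [:: u; v]; do 2!split; first by rewrite /= cats0.
  case=> [|[|//]] [|[|//]] //= _ _; try by left.
  exact: (phi_equiv_sym phiP).
Qed.

Lemma pseudo_powerP k x : 2 <= k ->
  pseudo_power phi k x <->
  exists2 m, 0 < m /\ size x = k * m &
    forall t, t < k.-1 -> pseudo_square phi (take (2 * m) (drop (t * m) x)).
Proof.
move=> k_ge2; split.
- case=> x_nil [us [sizeus [flat_us equiv_us]]]; subst x.
  set m := size (nth [::] us 0).
  have sizeu u : u \in us -> size u = m.
    move=> usu; have iu : index u us < k by rewrite -sizeus index_mem.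
    by rewrite -(nth_index [::] usu); apply: (size_phi_equiv phiP) (equiv_us _ 0 iu _); lia.
  have sizex : size (flatten us) = k * m by rewrite (size_flatten_uniform sizeu) sizeus.
  have m_gt0 : 0 < m.
    rewrite lt0n; apply/eqP => m0; apply: x_nil.
    by apply/size0nil; rewrite sizex m0 muln0.
  exists m => // t ltk; rewrite take_double_block !block_flatten //.
  have sizet i : i < k -> size (nth [::] us i) = m by move=> ?; rewrite sizeu ?mem_nth ?sizeus.
  by apply/pseudo_square_catP; rewrite ?sizet //; try lia; apply: equiv_us; lia.
- case=> m [m_gt0 sizex] squares.
  have sizeb t : t < k -> size (block x m t) = m by move/size_block; apply.
  have step t : t < k.-1 -> phi_equiv phi (block x m t) (block x m t.+1).
    move=> ltk; apply/pseudo_square_catP; rewrite ?sizeb //; try lia.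
    by rewrite -take_double_block; apply: squares.
  have to0 t : t < k -> phi_equiv phi (block x m t) (block x m 0).
    elim: t => [|t IHt] ltk; first by left.
    apply: (phi_equiv_trans phiP) (IHt _); last lia.
    by apply: (phi_equiv_sym phiP); apply: step; lia.
  split; first by move=> x0; move: sizex; rewrite x0 /=; lia.
  exists [seq block x m t | t <- iota 0 k].
  rewrite size_map size_iota flatten_blocks //; split=> //; split=> // i j ltik ltjk.
  rewrite !(nth_map 0) ?size_iota // !nth_iota // !add0n.
  exact: (phi_equiv_trans phiP) (to0 _ ltik) (phi_equiv_sym phiP (to0 _ ltjk)).
Qed.

End PseudoPowers.

(* [q] is 1-based and [nth [::] ss m.-1] plays the role of [s_m]. *)
Definition power_start (ss : seq bitseq) k m q :=
  1 <= q /\ forall t, t < k.-1 -> nth false (nth [::] ss m.-1) (q.-1 + t * m).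

Definition power_occ_upto (ss : seq bitseq) k h q L :=
  exists m, [/\ 1 <= m, m <= h, L = k * m & power_start ss k m q].

Lemma bool_ofP (P : Prop) : bool_of P <-> P.
Proof. by rewrite /bool_of; case: excluded_middle_informative. Qed.

Lemma size_factor (S : Type) (w : seq S) p L : 1 <= p -> p + L - 1 <= size w ->
  size (factor w p (p + L - 1)) = L.
Proof. by move=> p_ge1 pL; rewrite /factor size_take size_drop; case: ltnP; lia. Qed.

Lemma factor_window (S : Type) (w : seq S) p L t m : 1 <= p -> t * m + 2 * m <= L ->
  factor w (p + t * m) (p + t * m + 2 * m - 1) =
  take (2 * m) (drop (t * m) (factor w p (p + L - 1))).
Proof.
move=> p_ge1 tmL; rewrite /factor.
have tm_le : t * m <= (p + L - 1).+1 - p by lia.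
rewrite -(subnK tm_le) -take_drop take_takel; last lia.
by rewrite drop_drop; congr (take _ (drop _ _)); lia.
Qed.

Section SquareTable.

Variables (S : eqType) (phi : seq S -> seq S) (w : seq S).

Lemma size_all_s : size (all_s phi w) = (size w)./2.
Proof. by rewrite /all_s size_map size_iota. Qed.

Lemma nth_all_s m : 1 <= m <= (size w)./2 -> nth [::] (all_s phi w) m.-1 = s_of phi w m.
Proof.
case/andP=> m_ge1 m_le; rewrite /all_s (nth_map 0) ?size_iota; last lia.
by rewrite nth_iota; [congr s_of; lia | lia].
Qed.

Lemma size_s_of m : size (s_of phi w m) = size w - 2 * m + 1.
Proof. by rewrite size_map size_iota. Qed.

Lemma nth_s_of m j :
  nth false (s_of phi w m) j =
  (j < size w - 2 * m + 1) &&
  bool_of (pseudo_square phi (factor w j.+1 (j.+1 + 2 * m - 1))).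
Proof.
rewrite /s_of; case: ltnP => ltj /=; last by rewrite nth_default ?size_s_of.
by rewrite (nth_map 0) ?size_iota // nth_iota // add1n.
Qed.

Hypothesis phiP : antimorphic_involution phi.

Lemma power_occ_all_s k : 2 <= k -> forall p L,
  power_occ_upto (all_s phi w) k (size (all_s phi w)) p L <-> pseudo_power_occ phi k w p L.
Proof.
move=> k_ge2 p L; rewrite size_all_s.
have window_le m t : t < k.-1 -> t * m + 2 * m <= k * m.
  by move=> ltk; rewrite -mulnDl leq_mul2r; apply/orP; right; lia.
have start p' t m : 1 <= p' -> (p'.-1 + t * m).+1 = p' + t * m by lia.
split.
- case=> m [m_ge1 m_le -> [p_ge1 ones]].
  have s_m : nth [::] (all_s phi w) m.-1 = s_of phi w m by rewrite nth_all_s ?m_ge1.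
  have pL : p + k * m - 1 <= size w.
    have := ones k.-2 ltac:(lia); rewrite s_m nth_s_of => /andP[lt_last _].
    have : k.-2 * m + 2 * m = k * m by rewrite -mulnDl; congr (_ * _); lia.
    lia.
  split => //; first by rewrite muln_gt0; lia.
  apply/(pseudo_powerP phiP _ k_ge2); exists m; first by rewrite size_factor.
  move=> t ltk; have := ones t ltk; rewrite s_m nth_s_of.
  by case/andP=> _ /bool_ofP; rewrite start // -factor_window //; apply: window_le.
- case=> p_ge1 L_ge1 pL /(pseudo_powerP phiP _ k_ge2) [m [m_gt0 sizex] squares].
  rewrite size_factor // in sizex.
  have m_le : 2 * m <= size w by have := window_le m 0; rewrite mul0n add0n; lia.
  exists m; split => //; first lia.
  split => // t ltk; rewrite nth_all_s; last by apply/andP; split; lia.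
  rewrite nth_s_of; apply/andP; split; first by have := window_le m t ltk; lia.
  apply/bool_ofP; rewrite start // (@factor_window _ w p L) //; first exact: squares.
  by rewrite sizex; apply: window_le.
Qed.

End SquareTable.

(** * The machine program *)

Lemma nth_flatten_pairs (f g : nat -> nat) (l : seq nat) j : j < size l ->
  nth 0 (flatten [seq [:: f i; g i] | i <- l]) (2 * j) = f (nth 0 l j) /\
  nth 0 (flatten [seq [:: f i; g i] | i <- l]) (2 * j).+1 = g (nth 0 l j).
Proof. by elim: l j => [|x l IHl] [|j] // ltj; rewrite mulnS add2n; apply: IHl. Qed.

Lemma size_flatten_pairs (f g : nat -> nat) (l : seq nat) :
  size (flatten [seq [:: f i; g i] | i <- l]) = 2 * size l.
Proof. by elim: l => [|x l IHl] //=; rewrite IHl mulnS. Qed.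

Section InputLayout.

Variables (k : nat) (ss : seq bitseq).

Definition input_mem x := nth 0 (encode_input k ss) x.
Definition s_len i := size (nth [::] ss i).
Definition s_addr i := 2 + 2 * size ss + sumn (take i (map size ss)).
Definition out_base := s_addr (size ss).

Lemma nth_flatten_offset i j : i < size ss -> j < s_len i ->
  nth false (flatten ss) (sumn (take i (map size ss)) + j) = nth false (nth [::] ss i) j.
Proof.
rewrite /s_len; elim: ss i => [|s ss' IHss] [|i] //= lti ltj; first by rewrite nth_cat ltj.
by rewrite nth_cat -addnA ltnNge leq_addr /= addKn IHss.
Qed.

Lemma input_mem_header i : i < size ss ->
  input_mem (2 + 2 * i) = s_addr i /\ input_mem (3 + 2 * i) = s_len i.
Proof.
move=> lti; rewrite /input_mem /encode_input /= !nth_cat !size_flatten_pairs size_iota.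
rewrite !ifT; try lia.
have [|-> ->] := @nth_flatten_pairs
  (fun i0 => 2 + 2 * size ss + sumn (map size (take i0 ss)))
  (fun i0 => size (nth [::] ss i0)) (iota 0 (size ss)) i; first by rewrite size_iota.
by rewrite nth_iota // add0n /s_addr map_take.
Qed.

Lemma s_addrS i : i < size ss -> s_addr i + s_len i = s_addr i.+1.
Proof.
move=> lti; rewrite /s_addr /s_len (take_nth 0) ?size_map // -cats1 sumn_cat /=.
by rewrite (nth_map [::]) // addn0 addnA.
Qed.

Lemma leq_s_addr i j : i <= j -> s_addr i <= s_addr j.
Proof. by move=> leij; rewrite leq_add2l -(subnKC leij) takeD sumn_cat leq_addr. Qed.

Lemma s_addr_ge i : 2 + 2 * size ss <= s_addr i.
Proof. exact: leq_addr. Qed.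

Lemma out_base_ge : 2 + 2 * size ss <= out_base.
Proof. exact: s_addr_ge. Qed.

Lemma bit_addr_lt i j : i < size ss -> j < s_len i -> s_addr i + j < out_base.
Proof. by move=> lti ltj; have := s_addrS lti; have := leq_s_addr lti; rewrite /out_base; lia. Qed.

Lemma sumn_drop_s_len m : m < size ss ->
  sumn (drop m (map size ss)) = s_len m + sumn (drop m.+1 (map size ss)).
Proof. by move=> ltm; rewrite (drop_nth 0) ?size_map //= (nth_map [::]). Qed.

Lemma s_len_gt0 i : [::] \notin ss -> i < size ss -> 0 < s_len i.
Proof.
move=> nil_notin lti; rewrite lt0n size_eq0.
by apply: contraNneq nil_notin => <-; apply: mem_nth.
Qed.

Lemma input_mem_bit i j : i < size ss -> j < s_len i ->
  input_mem (s_addr i + j) = nth false (nth [::] ss i) j.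
Proof.
move=> lti ltj; rewrite /input_mem /encode_input /s_addr /= add0n -addnA nth_cat.
rewrite size_flatten_pairs size_iota ltnNge leq_addr /= addKn.
rewrite (nth_map false) ?nth_flatten_offset // size_flatten /shape.
have : sumn (take i.+1 (map size ss)) <= sumn (map size ss).
  by rewrite -{2}(cat_take_drop i.+1 (map size ss)) sumn_cat leq_addr.
rewrite (take_nth 0) ?size_map // -cats1 sumn_cat /= (nth_map [::]) //.
by rewrite /s_len in ltj; lia.
Qed.

End InputLayout.

(* With register numbers in brackets:
     k := M[0]; h := M[1]; out := first free cell after s_h;
     for m := 1 to h do                     (m in [5], h - m in [4])
       for j := |s_m| - 1 downto 0 do        (j in [11], address of s_m[j] in [15])
         if s_m[j] = 1 then
           s_m[j] := (j + m < |s_m| ? s_m[j + m] + 1 : 1);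
           if s_m[j] >= k - 1 then report (j + 1, k m)
   Since [s_m] is overwritten from right to left, [s_m[j + m]] then already
   holds the length of the run of ones of stride [m] starting at [j + m].
   Register [0] counts the reports, [1] is their base address, [2] the
   next free output cell, [3] = [k - 1], [6] = [k m], [7] = [k], [8] points
   into the header, [9] and [10] hold the address and length of [s_m],
   [14] = 1 and [20] = 0. *)
Definition pseudo_powers_prog : seq instr := [::
 IConst 14 1; ILoad 7 20; ILoad 4 14; ISub 3 7 14; IJz 4 46;
 IAdd 12 4 4; ILoad 13 12; IAdd 12 12 14; ILoad 12 12; IAdd 1 13 12;
 IAdd 2 1 20; IConst 8 2;
 IJz 4 46; ISub 4 4 14; IAdd 5 5 14; IAdd 6 6 7; ILoad 9 8; IAdd 8 8 14;
 ILoad 10 8; IAdd 8 8 14; IAdd 11 10 20; IAdd 15 9 10;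
 IJz 11 12; ISub 11 11 14; ISub 15 15 14; ILoad 12 15; IJz 12 22;
 IAdd 13 11 5; ISub 13 10 13; IJz 13 34; IAdd 13 15 5; ILoad 13 13;
 IAdd 13 13 14; IJmp 35; IAdd 13 14 20; IStore 15 13; ISub 12 3 13;
 IJz 12 39; IJmp 22; IAdd 12 11 14; IStore 2 12; IAdd 2 2 14; IStore 2 6;
 IAdd 2 2 14; IAdd 0 0 14; IJmp 22; IHalt].

Section Runs.

Variable P : seq instr.

Lemma step_halted st : halted P st -> step P st = st.
Proof. by case: st => c R M; rewrite /halted /=; case: (fetch P _). Qed.

Lemma run_iter n T st : n <= T -> halted P (iter n (step P) st) ->
  run P T st = Some (iter n (step P) st).
Proof.
elim: n T st => [|n IHn] [|T] st // leT haltn /=; rewrite ?haltn //.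
rewrite -iterS iterSr; case: ifP => [haltst | _]; last by apply: IHn; rewrite -?iterSr.
by rewrite -iterSr iter_fix // step_halted.
Qed.

Definition within N st (Q : state -> Prop) := exists2 n, n <= N & Q (iter n (step P) st).

Lemma within_trans N1 N2 st (Q1 Q2 : state -> Prop) :
  within N1 st Q1 -> (forall st', Q1 st' -> within N2 st' Q2) -> within (N2 + N1) st Q2.
Proof.
case=> n1 len1 Q1n1 /(_ _ Q1n1) [n2 len2 Q2n2].
by exists (n2 + n1); [rewrite leq_add | rewrite iterD].
Qed.

Lemma within_mono N1 N2 st (Q : state -> Prop) : N1 <= N2 -> within N1 st Q -> within N2 st Q.
Proof. by move=> le12 [n len Qn]; exists n => //; apply: leq_trans le12. Qed.

Definition at_pc n (I : nat -> (nat -> nat) -> (nat -> nat) -> Prop) (st : state) :=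
  pc st = n /\ exists c, I c (reg st) (Defs.mem st).

Lemma within_at_pc N1 N2 n I st (Q : state -> Prop) :
  within N1 st (at_pc n I) -> (forall c R M, I c R M -> within N2 (State n R M) Q) ->
  within (N2 + N1) st Q.
Proof.
move=> reach next; apply: within_trans reach _ => -[pc0 R M] [/= -> [c inv]].
exact: next inv.
Qed.

End Runs.

(** * Correctness of the program *)

Definition ones_run (s : bitseq) m j v :=
  (forall t, t < v -> nth false s (j + t * m)) /\ ~~ nth false s (j + v * m).

Lemma ones_run_leq (s : bitseq) m j v n : ones_run s m j v ->
  (n <= v <-> forall t, t < n -> nth false s (j + t * m)).
Proof.
case=> ones stop; split=> [lenv t ltn | ones_n]; first by apply: ones; lia.
by case: (leqP n v) => // ltv; rewrite ones_n in stop.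
Qed.

Lemma ones_run0 (s : bitseq) m j : ~~ nth false s j -> ones_run s m j 0.
Proof. by split => // ; rewrite mul0n addn0. Qed.

Lemma ones_run_last (s : bitseq) m j : nth false s j -> size s <= j + m -> ones_run s m j 1.
Proof.
move=> sj lesz; split=> [[|//] _ |]; first by rewrite mul0n addn0.
by rewrite mul1n nth_default.
Qed.

Lemma ones_runS (s : bitseq) m j v :
  nth false s j -> ones_run s m (j + m) v -> ones_run s m j v.+1.
Proof.
move=> sj [ones stop]; split; last by rewrite mulSn addnA.
by case=> [_|t ltv]; rewrite ?mul0n ?addn0 // mulSn addnA; apply: ones.
Qed.

Lemma mem_output st p L :
  (p, L) \in output st <->
  exists2 j, j < reg st 0 & Defs.mem st (reg st 1 + 2 * j) = p /\ Defs.mem st (reg st 1 + 2 * j + 1) = L.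
Proof.
split; first by case/mapP=> j; rewrite mem_iota add0n => /andP[_ ltj] [-> ->]; exists j.
by case=> j ltj [<- <-]; apply/mapP; exists j; rewrite // mem_iota.
Qed.

(* Symbolic execution: with [iter] opaque to [simpl], only the innermost
   [step] is reduced, one instruction at a time; it stops at a branch until a
   hypothesis [(e == v) = b] decides it. *)
#[local] Arguments iter : simpl never.

Lemma updE f x v y : upd f x v y = if y == x then v else f y. Proof. by []. Qed.

Ltac reg_rw := repeat match goal with
  | H : ?R ?n = _ |- context [?R ?n] => is_var R; rewrite H
  | H : (?e == ?v) = _ |- context [?e == ?v] => rewrite H
  end.

Ltac regs := rewrite ?updE /=; reg_rw.

Ltac exec_step :=
  lazymatch goal with
  | |- context [iter _ (step _) (State ?c _ _)] => lazymatch c with O => idtac | S _ => idtac end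
  end;
  rewrite iterSr /= ?updE /=; reg_rw; rewrite /=.

Ltac exec := repeat exec_step; try change (iter 0 ?f ?x) with x.

Section Verification.

Variables (k : nat) (ss : seq bitseq).
Hypothesis k_ge2 : 2 <= k.

Local Notation P := pseudo_powers_prog.
Local Notation bits i := (nth [::] ss i).

Definition consts (R : nat -> nat) :=
  [/\ R 1 = out_base ss, R 3 = k.-1, R 7 = k, R 14 = 1 & R 20 = 0].

Definition header_intact (M : nat -> nat) :=
  forall x, x < 2 + 2 * size ss -> M x = input_mem k ss x.

Definition strings_intact m (M : nat -> nat) :=
  forall x, s_addr ss m <= x -> x < out_base ss -> M x = input_mem k ss x.

Definition stores_occs (M : nat -> nat) c (occ : nat -> nat -> Prop) :=
  forall q L, (exists2 i, i < c & M (out_base ss + 2 * i) = q /\ M (out_base ss + 2 * i + 1) = L)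
    <-> occ q L.

(* The occurrences known while [s_(i+1)] is scanned: those of block length at
   most [i], and those of block length [i + 1] starting after the 0-based
   position [p]. *)
Definition occ_scan i p q L :=
  power_occ_upto ss k i q L \/ [/\ L = k * i.+1, p < q & power_start ss k i.+1 q].

Definition outer_inv m c (R M : nat -> nat) :=
  [/\ consts R, [/\ R 0 = c, R 2 = out_base ss + 2 * c, R 4 = size ss - m, R 5 = m & R 6 = k * m],
      R 8 = 2 + 2 * m, m <= size ss &
      [/\ header_intact M, strings_intact m M & stores_occs M c (power_occ_upto ss k m)]].

Definition scan_regs i c (R : nat -> nat) :=
  [/\ consts R,
      [/\ R 0 = c, R 2 = out_base ss + 2 * c, R 4 = size ss - i.+1, R 5 = i.+1 & R 6 = k * i.+1],
      R 8 = 2 + 2 * i.+1, R 9 = s_addr ss i & R 10 = s_len ss i].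

Definition scan_mem i lo hi (M : nat -> nat) :=
  [/\ header_intact M, strings_intact i.+1 M,
      forall j, j < lo -> M (s_addr ss i + j) = input_mem k ss (s_addr ss i + j) &
      forall j, hi <= j -> j < s_len ss i -> ones_run (bits i) i.+1 j (M (s_addr ss i + j))].

Definition inner_inv i p c (R M : nat -> nat) :=
  [/\ scan_regs i c R, i < size ss, [/\ R 11 = p, R 15 = s_addr ss i + p & p <= s_len ss i],
      scan_mem i p p M & stores_occs M c (occ_scan i p)].

Definition store_inv i j c (R M : nat -> nat) :=
  [/\ scan_regs i c R, i < size ss,
      [/\ R 11 = j, R 15 = s_addr ss i + j, j < s_len ss i & ones_run (bits i) i.+1 j (R 13)],
      scan_mem i j j.+1 M & stores_occs M c (occ_scan i j.+1)].

Lemma occ_scan0 i q L : occ_scan i 0 q L <-> power_occ_upto ss k i.+1 q L.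
Proof.
split=> [[[m [? ? ? ?]] | [-> _ ?]] | [m [m_ge1 m_le -> start]]]; first by exists m; split => //; lia.
  by exists i.+1.
case: (ltngtP m i.+1) => [ltm | gtm | eqm]; [by left; exists m; split => //; lia | lia |].
by subst m; right; split => //; case: start.
Qed.

Lemma inner_done i c R M : inner_inv i 0 c R M ->
  within P 1 (State 22 R M) (at_pc 12 (outer_inv i.+1)).
Proof.
case=> [[[? ? ? ? ?] [? ? ? ? ?] ? ? ?] lti [? ? _] [hd str _ _] out].
exists 1 => //; exec; split => //; exists c; split => //=; split => // q L.
by rewrite out occ_scan0.
Qed.

Lemma power_start_bit m q : power_start ss k m.+1 q -> nth false (bits m) q.-1.
Proof. by case=> _ /(_ 0); rewrite mul0n addn0; apply; lia. Qed.

Lemma power_start_le m q : power_start ss k m.+1 q -> q <= s_len ss m.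
Proof.
move=> start; have := power_start_bit start; case: start => q_ge1 _.
by case: (ltnP q.-1 (s_len ss m)) => [|le]; [lia | rewrite nth_default].
Qed.

Lemma power_start_run i j v : ones_run (bits i) i.+1 j v ->
  power_start ss k i.+1 j.+1 <-> k.-1 <= v.
Proof. by move/ones_run_leq ->; split=> [[]|]. Qed.

Lemma occ_scanS i j q L :
  occ_scan i j q L <->
  occ_scan i j.+1 q L \/ [/\ q = j.+1, L = k * i.+1 & power_start ss k i.+1 j.+1].
Proof.
split=> [[occ | [-> ltq start]] | [[occ | [-> ltq start]] | [-> -> start]]].
- by left; left.
- case: (ltngtP q j.+1) => [| ltq' | eqq]; [lia | by left; right | by subst q; right].
- by left.
- by right; split => //; lia.
- by right.
Qed.

Lemma stores_occs_store M c occ a v : a < out_base ss ->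
  stores_occs M c occ -> stores_occs (upd M a v) c occ.
Proof.
move=> lta out q L; rewrite -out; split=> -[i lti [<- <-]]; exists i => //;
  rewrite !updE !ifN_eq //; lia.
Qed.

Lemma stores_occs_push M c (occ : nat -> nat -> Prop) q0 L0 :
  stores_occs M c occ ->
  stores_occs (upd (upd M (out_base ss + 2 * c) q0) (out_base ss + 2 * c + 1) L0) c.+1
    (fun q L => occ q L \/ q = q0 /\ L = L0).
Proof.
move=> out q L; rewrite -out; split.
- case=> i lti; rewrite !updE; case: (ltngtP i c) => [ltc | | ->]; [| lia |].
    by rewrite !ifN_eq; try lia; move=> ?; left; exists i.
  by rewrite eqxx ifN_eq ?eqxx; [move=> [-> ->]; right | lia].
- case=> [[i lti [<- <-]] | [-> ->]].
    by exists i; [lia | rewrite !updE !ifN_eq //; lia].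
  by exists c => //; rewrite !updE eqxx ifN_eq ?eqxx //; lia.
Qed.

Lemma stores_occs_ext M c (occ occ' : nat -> nat -> Prop) :
  (forall q L, occ q L <-> occ' q L) -> stores_occs M c occ -> stores_occs M c occ'.
Proof. by move=> eqocc out q L; rewrite out eqocc. Qed.

Lemma inner_zero i j c R M : inner_inv i j.+1 c R M -> nth false (bits i) j = false ->
  within P 5 (State 22 R M) (at_pc 22 (inner_inv i j)).
Proof.
case=> [[[? ? ? ? ?] [? ? ? ? ?] ? ? ?] lti [? ? ltj] [hd str unread runs] out] bit0.
have Mj : M (s_addr ss i + j.+1 - 1) = 0.
  by rewrite (_ : _ - 1 = s_addr ss i + j) ?unread ?input_mem_bit ?bit0 //; lia.
exists 5 => //; exec; split => //; exists c; split => //=.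
- by split; regs; lia.
- split => // [j' ltj' | j' lej' ltj']; first by apply: unread; lia.
  case: (ltngtP j' j) => [| ? | ->]; [lia | exact: runs |].
  have -> : M (s_addr ss i + j) = 0 by rewrite -Mj; congr M; lia.
  by apply: ones_run0; rewrite bit0.
- apply: stores_occs_ext out => q L; rewrite (occ_scanS i j).
  by split=> [| [// | [_ _ /power_start_bit]]]; [left | rewrite /= bit0].
Qed.

Lemma inner_one i j c R M : inner_inv i j.+1 c R M -> nth false (bits i) j ->
  within P 12 (State 22 R M) (at_pc 35 (store_inv i j)).
Proof.
case=> [[[? ? ? ? ?] [? ? ? ? ?] ? ? ?] lti [? ? ltj] [hd str unread runs] out] bit1.
have Mj : M (s_addr ss i + j.+1 - 1) = 1.
  by rewrite (_ : _ - 1 = s_addr ss i + j) ?unread ?input_mem_bit ?bit1 //; lia.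
have mem_inv : scan_mem i j j.+1 M.
  by split => // j' ltj'; apply: unread; lia.
case: (leqP (s_len ss i) (j + i.+1)) => [edge | inside].
- have cond : (s_len ss i - (j.+1 - 1 + i.+1) == 0) = true by lia.
  exists 9 => //; exec; split => //; exists c; split => //=.
  split; regs => //; try lia.
  by apply: ones_run_last; rewrite // -/(s_len ss i); lia.
- have cond : (s_len ss i - (j.+1 - 1 + i.+1) == 0) = false by lia.
  have Mnext : M (s_addr ss i + j.+1 - 1 + i.+1) = M (s_addr ss i + (j + i.+1)) by congr M; lia.
  exists 12 => //; exec; split => //; exists c; split => //=.
  split; regs => //; try lia.
  by rewrite addn1; apply: ones_runS => //; apply: runs; lia.
Qed.


Lemma scan_mem_store i j v M : i < size ss -> j < s_len ss i ->
  ones_run (bits i) i.+1 j v -> scan_mem i j j.+1 M ->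
  scan_mem i j j (upd M (s_addr ss i + j) v).
Proof.
move=> lti ltj run [hd str unread runs].
have := s_addr_ge ss i; have := s_addrS lti.
split=> [x ltx | x lex ltx | j' ltj' | j' lej' ltj']; rewrite updE.
- by rewrite ifN_eq ?hd //; lia.
- by rewrite ifN_eq ?str //; lia.
- by rewrite ifN_eq ?unread //; lia.
- by case: eqP => [/addnI -> // | neq]; apply: runs => //; lia.
Qed.


Lemma scan_mem_report i lo hi a v M : i < size ss -> lo <= s_len ss i -> out_base ss <= a ->
  scan_mem i lo hi M -> scan_mem i lo hi (upd M a v).
Proof.
move=> lti lelo lea [hd str unread runs]; have := out_base_ge ss.
split=> [x ltx | x lex ltx | j' ltj' | j' lej' ltj']; rewrite updE ifN_eq.
- exact: hd.
- lia.
- exact: str.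
- lia.
- by apply: unread.
- by have := bit_addr_lt lti (leq_trans ltj' lelo); lia.
- exact: runs.
- by have := bit_addr_lt lti ltj'; lia.
Qed.

Lemma store_step i j c R M : store_inv i j c R M ->
  within P 10 (State 35 R M) (at_pc 22 (inner_inv i j)).
Proof.
case=> [[[? ? ? ? ?] [? ? ? ? ?] ? ? ?] lti [? ? ltj run] mem out].
have [v Rv] : exists v, R 13 = v by exists (R 13).
rewrite Rv in run; have start := power_start_run run.
have mem' := scan_mem_store lti ltj run mem.
have out' := stores_occs_store v (bit_addr_lt lti ltj) out.
case: (leqP k.-1 v) => [report | no_report].
- have cond : (k.-1 - v == 0) = true by lia.
  exists 10 => //; exec; split => //; exists c.+1; split => //=.
  + by repeat split; regs; lia.
  + by split; regs; lia.
  + by apply: scan_mem_report; try lia; apply: scan_mem_report; try lia.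
  apply: stores_occs_ext (stores_occs_push _ _ out') => q L.
  have start_j : power_start ss k i.+1 j.+1 by apply/start.
  rewrite (occ_scanS i j) addn1.
  by split=> [[? | [-> ->]] | [? | [-> -> _]]]; [left | right | left | right].
- have cond : (k.-1 - v == 0) = false by lia.
  exists 4 => //; exec; split => //; exists c; split => //=.
  + by split; regs; lia.
  apply: stores_occs_ext out' => q L; rewrite (occ_scanS i j).
  by split=> [| [// | [_ _ /start]]]; [left | lia].
Qed.

Lemma outer_step m c R M : outer_inv m c R M -> m < size ss ->
  within P 10 (State 12 R M) (at_pc 22 (inner_inv m (s_len ss m))).
Proof.
case=> [[? ? ? ? ?] [? ? ? ? ?] ? lem [hd str out]] ltm.
have [addr len] := input_mem_header k ltm.
have Maddr : M (2 + 2 * m) = s_addr ss m by rewrite hd //; lia.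
have Mlen : M (2 + 2 * m + 1) = s_len ss m by rewrite hd -?len ?addn1 //; lia.
have cond : (size ss - m == 0) = false by lia.
have := s_addrS ltm; have := bit_addr_lt ltm; have := s_addr_ge ss m => addr_ge addr_lt addrS.
exists 10 => //; exec; split => //; exists c; split => //=.
- by repeat split; regs; rewrite ?mulnS; lia.
- by split; regs; lia.
- split=> // [x lex ltx | j ltj | j lej ltj]; last lia.
  + by apply: str => //; lia.
  + by apply: str; [lia | exact: addr_lt].
move=> q L; rewrite out; split=> [occ | [// | [_ ltq /power_start_le]]]; [by left | lia].
Qed.

Lemma inner_loop i p c R M : inner_inv i p c R M ->
  within P (22 * p + 1) (State 22 R M) (at_pc 12 (outer_inv i.+1)).
Proof.
elim: p c R M => [|j IHj] c R M inv; first exact: inner_done inv.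
case bit: (nth false (bits i) j).
- have store c' R' M' : store_inv i j c' R' M' ->
      within P (22 * j + 1 + 10) (State 35 R' M') (at_pc 12 (outer_inv i.+1)).
    by move=> inv'; apply: within_at_pc (store_step inv') _ => c'' R'' M'' /IHj.
  by apply: within_mono (within_at_pc (inner_one inv bit) store); lia.
- by apply: within_mono (within_at_pc (inner_zero inv bit) (fun _ _ _ => @IHj _ _ _)); lia.
Qed.



Lemma outer_loop m c R M : [::] \notin ss -> outer_inv m c R M ->
  within P (33 * sumn (drop m (map size ss)) + 1) (State 12 R M) (at_pc 46 (outer_inv (size ss))).
Proof.
move=> nil_notin; move Hd : (size ss - m) => d; elim: d m c R M Hd => [|d IHd] m c R M Hd inv.
  have eqm : m = size ss by case: inv => _ _ _ lem _; lia.
  case: (inv) => [_ [_ _ ? _ _] _ _ _]; have cond : (size ss - m == 0) = true by lia.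
  by exists 1; [lia | exec; split => //; exists c; rewrite -eqm].
have ltm : m < size ss by lia.
have loop c' R' M' : inner_inv m (s_len ss m) c' R' M' ->
    within P (33 * sumn (drop m.+1 (map size ss)) + 1 + (22 * s_len ss m + 1)) (State 22 R' M')
      (at_pc 46 (outer_inv (size ss))).
  by move/inner_loop => reach; apply: within_at_pc reach _ => c'' R'' M''; apply: IHd; lia.
apply: within_mono (within_at_pc (outer_step inv ltm) loop).
by rewrite (sumn_drop_s_len ltm); have := s_len_gt0 nil_notin ltm; lia.
Qed.

Lemma init_step : 0 < size ss ->
  within P 12 (init_state (encode_input k ss)) (at_pc 12 (outer_inv 0)).
Proof.
case Eh : (size ss) => [// | h] _.
have lth : h < size ss by rewrite Eh.
have [addr len] := input_mem_header k lth.
have hd : header_intact (input_mem k ss) by [].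
have str : strings_intact 0 (input_mem k ss) by [].
change (init_state _) with (State 0 (fun=> 0) (input_mem k ss)).
move eqM : (input_mem k ss) hd str addr len => M hd str addr len.
have M0 : M 0 = k by rewrite -eqM.
have M1 : M 1 = h.+1 by rewrite -eqM -Eh.
have Maddr : M (h.+1 + h.+1) = s_addr ss h by rewrite -addr; congr M; lia.
have Mlen : M (h.+1 + h.+1 + 1) = s_len ss h by rewrite -len; congr M; lia.
have := s_addrS lth; rewrite -Eh -/(out_base ss) => addrS.
exists 12 => //; exec; split => //; exists 0; split => //=.
- by repeat (split; regs); lia.
- by repeat (split; regs); rewrite ?muln0 ?addn0 ?Eh.
by split=> // q L; split=> [[] // | [m [? ? _ _]]]; lia.
Qed.

Lemma pseudo_powers_prog_correct : [::] \notin ss ->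
  exists st', run P (50 * (sumn (map size ss) + 1)) (init_state (encode_input k ss)) = Some st' /\
    forall p L, (p, L) \in output st' <-> power_occ_upto ss k (size ss) p L.
Proof.
move=> nil_notin; case: (posnP (size ss)) => [h0 | h_gt0].
  have M1 : input_mem k ss 1 = 0 by rewrite /input_mem /encode_input /= h0.
  change (init_state _) with (State 0 (fun=> 0) (input_mem k ss)).
  move eqM : (input_mem k ss) M1 => M M1.
  exists (iter 5 (step P) (State 0 (fun=> 0) M)); split; first by apply: run_iter; [lia | exec].
  by move=> p L; rewrite mem_output; exec; split=> [[] // | [m [? ? _ _]]]; lia.
have [n len [/= pc46 [c [[Rout _ _ _ _] [Rc _ _ _ _] _ _ [_ _ out]]]]] :=
  within_at_pc (init_step h_gt0) (fun c R M inv => outer_loop nil_notin inv).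
exists (iter n (step P) (init_state (encode_input k ss))); split.
  by apply: run_iter; [rewrite drop0 in len; lia | rewrite /halted /fetch pc46].
by move=> p L; rewrite mem_output Rc Rout; apply: out.
Qed.

End Verification.

Lemma nil_notin_all_s (S : eqType) (phi : seq S -> seq S) (w : seq S) : [::] \notin all_s phi w.
Proof. by apply/mapP=> -[m _ /(congr1 size)]; rewrite size_s_of addn1. Qed.

Theorem mainTheorem15 :
  exists (P : seq instr) (c : nat),
  forall (S : finType) (phi : seq S -> seq S) (w : seq S) (k : nat),
    antimorphic_involution phi -> 2 <= k ->
    exists st' : state,
      run P (c * (sumn (map size (all_s phi w)) + 1))
            (init_state (encode_input k (all_s phi w))) = Some st' /\
      (forall p L : nat,
         (p, L) \in output st' <-> pseudo_power_occ phi k w p L).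
Proof.
exists pseudo_powers_prog, 50 => S phi w k phiP k_ge2.
have [st' [halts out]] := pseudo_powers_prog_correct k_ge2 (nil_notin_all_s phi w).
by exists st'; split => // p L; rewrite out power_occ_all_s.
Qed.
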